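(* Let $\gamma$ be an admissible path and let $t<s<t+\pi$ be in the domain of $\gamma$. Then the angle between the vector $\gamma'(t)$ and the ray from $\gamma(t)$ through $\gamma(s)$ is at most $\frac{s-t}{2}$.
   Context: An admissible path is a continuously differentiable planar curve $\gamma$ parameterized by arclength (so $\gamma'(t)$ is a unit tangent vector) such that for all $t<s<t+\pi$ in its domain, the angle $\alpha(s,t)$ between the directions $\gamma'(s)$ and $\gamma'(t)$ satisfies $\alpha(s,t)\le s-t$. *)

From Stdlib Require Import Reals.
From Coquelicot Require Import Coquelicot.
Open Scope R_scope.

Definition vec := (R * R)%type.
Definition vsub (u v : vec) : vec := (fst u - fst v, snd u - snd v).
Definition vdot (u v : vec) : R := fst u * fst v + snd u * snd v.
Definition vnorm (u : vec) : R := sqrt (vdot u u).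

Definition vangle (u v : vec) : R := acos (vdot u v / (vnorm u * vnorm v)).

Definition is_interval (I : R -> Prop) : Prop :=
  forall a b x, I a -> I b -> a <= x <= b -> I x.

Definition C1_arclength (I : R -> Prop) (gamma dgamma : R -> vec) : Prop :=
  is_interval I /\
  (forall x, I x ->
     is_derive (fun y => fst (gamma y)) x (fst (dgamma x)) /\
     is_derive (fun y => snd (gamma y)) x (snd (dgamma x))) /\
  (forall x, I x ->
     filterlim dgamma (within I (locally x)) (locally (dgamma x))) /\
  (forall x, I x -> vnorm (dgamma x) = 1).

Definition admissible (I : R -> Prop) (gamma dgamma : R -> vec) : Prop :=
  C1_arclength I gamma dgamma /\
  (forall t s, I t -> I s -> t < s < t + PI ->
     vangle (dgamma s) (dgamma t) <= s - t).

From Stdlib Require Import Reals Lra.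
From Coquelicot Require Import Coquelicot.
Open Scope R_scope.

(* Let u = gamma'(t) and phi = (s - t)/2.  Admissibility puts gamma'(r) within angle
   r - t of u, so gamma'(r).u >= cos (r - t), and integrating over [t, s] gives
   (gamma s - gamma t).u >= sin (s - t) > 0.  The unit vectors
   w = sin phi u +- cos phi u^perp make the angle pi/2 - phi with u, so gamma'(r).w >=
   sin (phi - (r - t)), whose integral over [t, s] is 0; hence the chord has a
   nonnegative component along both w, which confines it to the cone of half-angle
   phi around u. *)

Definition vperp (u : vec) : vec := (- snd u, fst u).

Definition vcomb (a : R) (u : vec) (b : R) (v : vec) : vec :=
  (a * fst u + b * fst v, a * snd u + b * snd v).

Lemma vdot_comm (u v : vec) : vdot u v = vdot v u.
Proof. unfold vdot; ring. Qed.

Lemma vdot_vcomb (p u v : vec) (a b : R) :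
  vdot p (vcomb a u b v) = a * vdot p u + b * vdot p v.
Proof. unfold vdot, vcomb; simpl; ring. Qed.

Lemma vdot_vsub_diag (p w : vec) : vdot (vsub p p) w = 0.
Proof. unfold vdot, vsub; simpl; ring. Qed.

Lemma vnorm_eq1_vdot (u : vec) : vnorm u = 1 -> vdot u u = 1.
Proof.
  unfold vnorm; intros Hu.
  assert (Hpos : 0 <= vdot u u) by (unfold vdot; nra).
  rewrite <- (sqrt_sqrt _ Hpos), Hu; ring.
Qed.

Lemma vdot_unit_decomp (u p : vec) :
  vnorm u = 1 -> vdot p p = vdot p u ^ 2 + vdot p (vperp u) ^ 2.
Proof.
  intros Hu; apply vnorm_eq1_vdot in Hu; revert Hu.
  unfold vdot, vperp; simpl; intros Hu.
  transitivity ((fst p * fst p + snd p * snd p) * (fst u * fst u + snd u * snd u));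
    [rewrite Hu | ]; ring.
Qed.

Lemma vnorm_unit_decomp (u p : vec) :
  vnorm u = 1 -> vnorm p = sqrt (vdot p u ^ 2 + vdot p (vperp u) ^ 2).
Proof. intros Hu; unfold vnorm at 1; rewrite (vdot_unit_decomp u p Hu); reflexivity. Qed.

Lemma cos_le_vdot_of_vangle_le (u v : vec) (theta : R) :
  vnorm u = 1 -> vnorm v = 1 -> vangle v u <= theta <= PI -> cos theta <= vdot v u.
Proof.
  intros Hu Hv.
  assert (Hdec := vdot_unit_decomp u v Hu).
  rewrite (vnorm_eq1_vdot v Hv) in Hdec.
  assert (Hc : -1 <= vdot v u <= 1) by nra.
  unfold vangle; rewrite Hu, Hv, Rmult_1_r, Rdiv_1_r; intros Htheta.
  rewrite <- (cos_acos _ Hc).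
  pose proof (acos_bound (vdot v u)).
  apply cos_decr_1; lra.
Qed.

Lemma sin_sub_le_of_cos_le (phi rho c d : R) :
  c ^ 2 + d ^ 2 = 1 -> 0 <= phi <= PI / 2 -> 0 <= rho <= phi + PI / 2 ->
  cos rho <= c -> sin (phi - rho) <= sin phi * c - cos phi * Rabs d.
Proof.
  intros Hcd Hphi Hrho Hc.
  assert (Hc1 : -1 <= c <= 1) by nra.
  assert (Hd : Rabs d = sqrt (1 - c²)).
  { rewrite <- sqrt_Rsqr_abs; f_equal; unfold Rsqr; nra. }
  pose proof (acos_bound c).
  assert (Hal : acos c <= rho).
  { apply cos_decr_0; try lra. rewrite cos_acos; lra. }
  assert (Hmono : sin (phi - rho) <= sin (phi - acos c)) by (apply sin_incr_1; lra).
  rewrite (sin_minus phi (acos c)), cos_acos, sin_acos, <- Hd in Hmono by exact Hc1.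
  exact Hmono.
Qed.

Lemma acos_div_norm_le (phi x y : R) :
  0 < phi <= PI / 2 -> 0 < x ^ 2 + y ^ 2 ->
  cos phi * Rabs y <= sin phi * x -> acos (x / sqrt (x ^ 2 + y ^ 2)) <= phi.
Proof.
  intros Hphi Hxy Hslope.
  assert (Hs : 0 < sin phi) by (apply sin_gt_0; lra).
  assert (Hc : 0 <= cos phi) by (apply cos_ge_0; lra).
  assert (Hsc := sin2_cos2 phi); unfold Rsqr in Hsc.
  assert (Hx : 0 <= x) by (pose proof (Rabs_pos y); nra).
  set (N := sqrt (x ^ 2 + y ^ 2)).
  assert (HN : 0 < N) by (apply sqrt_lt_R0; exact Hxy).
  assert (HN2 : N * N = x ^ 2 + y ^ 2) by (apply sqrt_sqrt; lra).
  assert (Hy2 : Rabs y * Rabs y = y ^ 2) by (rewrite <- Rabs_mult, Rabs_pos_eq; nra).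
  assert (HxN : x <= N) by nra.
  assert (HcN : cos phi * N <= x).
  { assert (Hy : (cos phi * Rabs y) ^ 2 <= (sin phi * x) ^ 2)
      by (pose proof (Rabs_pos y); apply pow_incr; nra).
    assert ((cos phi * N) ^ 2 <= x ^ 2) by nra.
    nra. }
  assert (Hq : cos phi <= x / N <= 1).
  { split; apply Rmult_le_reg_r with N; auto; unfold Rdiv;
      rewrite Rmult_assoc, Rinv_l, Rmult_1_r by lra; lra. }
  pose proof (acos_bound (x / N)).
  apply cos_decr_0; try lra.
  rewrite cos_acos by (pose proof (cos_ge_0 phi); lra). lra.
Qed.

Lemma is_derive_increment_le (F G f g : R -> R) (a b : R) :
  a <= b ->
  (forall x, a <= x <= b -> is_derive F x (f x)) ->
  (forall x, a <= x <= b -> is_derive G x (g x)) ->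
  (forall x, a <= x <= b -> f x <= g x) ->
  F b - F a <= G b - G a.
Proof.
  intros Hab HF HG Hfg.
  assert (HD : forall x, a <= x <= b -> is_derive (fun y => G y - F y) x (g x - f x))
    by (intros x Hx; apply (is_derive_minus G F); auto).
  destruct (MVT_gen (fun y => G y - F y) a b (fun x => g x - f x)) as [c [Hc Hmvt]];
    rewrite Rmin_left, Rmax_right in * by exact Hab.
  - intros x Hx; apply HD; lra.
  - intros x Hx; apply continuity_pt_filterlim,
      (ex_derive_continuous (V := R_NormedModule) (fun y => G y - F y)).
    eexists; apply HD, Hx.
  - assert (0 <= g c - f c) by (pose proof (Hfg c Hc); lra). nra.
Qed.

Lemma is_derive_vdot_vsub (g dg : R -> vec) (p w : vec) (x : R) :
  is_derive (fun y => fst (g y)) x (fst (dg x)) ->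
  is_derive (fun y => snd (g y)) x (snd (dg x)) ->
  is_derive (fun r => vdot (vsub (g r) p) w) x (vdot (dg x) w).
Proof.
  intros H1 H2; unfold vdot, vsub; simpl.
  assert (Hcoord : forall (h : R -> R) (dh c k : R), is_derive h x dh ->
            is_derive (fun r => (h r - c) * k) x (dh * k)).
  { intros h dh c k Hh; apply is_derive_Reals in Hh; apply is_derive_Reals.
    rewrite <- (Rminus_0_r dh).
    apply (derivable_pt_lim_scal_right (fun r => h r - c)),
      (derivable_pt_lim_minus h (fun _ => c)), derivable_pt_lim_const; exact Hh. }
  apply (is_derive_plus (fun r => (fst (g r) - fst p) * fst w)
                        (fun r => (snd (g r) - snd p) * snd w)); auto.
Qed.

Lemma increment_le_vdot_chord (gamma dgamma : R -> vec) (w : vec) (F f : R -> R) (a b : R) :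
  a <= b ->
  (forall r, a <= r <= b ->
     is_derive (fun y => fst (gamma y)) r (fst (dgamma r)) /\
     is_derive (fun y => snd (gamma y)) r (snd (dgamma r))) ->
  (forall r, a <= r <= b -> is_derive F r (f r)) ->
  (forall r, a <= r <= b -> f r <= vdot (dgamma r) w) ->
  F b - F a <= vdot (vsub (gamma b) (gamma a)) w.
Proof.
  intros Hab Hgamma HF Hfw.
  rewrite <- (Rminus_0_r (vdot _ w)), <- (vdot_vsub_diag (gamma a) w).
  apply (is_derive_increment_le F (fun r => vdot (vsub (gamma r) (gamma a)) w) f
           (fun r => vdot (dgamma r) w)); auto.
  intros r Hr; apply is_derive_vdot_vsub; apply Hgamma, Hr.
Qed.

Section AdmissibleChord.

Variables (I : R -> Prop) (gamma dgamma : R -> vec) (t s : R).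
Hypotheses (Hadm : admissible I gamma dgamma) (It : I t) (Is : I s)
  (Hts : t < s < t + PI).

Lemma admissible_mem r : t <= r <= s -> I r.
Proof. destruct Hadm as [[Hint _] _]; apply Hint; auto. Qed.

Lemma admissible_vnorm r : t <= r <= s -> vnorm (dgamma r) = 1.
Proof. destruct Hadm as [[_ [_ [_ Hn]]] _]; intros Hr; apply Hn, admissible_mem, Hr. Qed.

Lemma admissible_is_derive r : t <= r <= s ->
  is_derive (fun y => fst (gamma y)) r (fst (dgamma r)) /\
  is_derive (fun y => snd (gamma y)) r (snd (dgamma r)).
Proof. destruct Hadm as [[_ [Hder _]] _]; intros Hr; apply Hder, admissible_mem, Hr. Qed.

Lemma admissible_cos_le_vdot r : t <= r <= s -> cos (r - t) <= vdot (dgamma r) (dgamma t).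
Proof.
  intros Hr.
  assert (Hu := admissible_vnorm t ltac:(lra)).
  destruct (Req_dec r t) as [-> | Hrt].
  - rewrite Rminus_diag, cos_0, (vnorm_eq1_vdot _ Hu); lra.
  - destruct Hadm as [_ Hangle].
    apply cos_le_vdot_of_vangle_le; auto using admissible_vnorm.
    split; [apply Hangle; auto using admissible_mem | ]; lra.
Qed.

Lemma admissible_chord_along_tangent :
  sin (s - t) <= vdot (vsub (gamma s) (gamma t)) (dgamma t).
Proof.
  replace (sin (s - t)) with (sin (s - t) - sin (t - t)) by (rewrite Rminus_diag, sin_0; ring).
  apply (increment_le_vdot_chord gamma dgamma _ (fun r => sin (r - t)) (fun r => cos (r - t)));
    auto using admissible_is_derive, admissible_cos_le_vdot; [lra |].
  intros r _; auto_derive; auto; rewrite Rmult_1_l; reflexivity.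
Qed.

Lemma admissible_chord_across_tangent :
  let x := vdot (vsub (gamma s) (gamma t)) (dgamma t) in
  let y := vdot (vsub (gamma s) (gamma t)) (vperp (dgamma t)) in
  cos ((s - t) / 2) * Rabs y <= sin ((s - t) / 2) * x.
Proof.
  intros x y; set (phi := (s - t) / 2).
  assert (Hphi : 0 <= phi <= PI / 2) by (unfold phi; lra).
  assert (Hcos : 0 <= cos phi) by (apply cos_ge_0; lra).
  assert (Hside : forall e, Rabs e <= 1 -> 0 <= sin phi * x + e * (cos phi * y)).
  { intros e He.
    unfold x, y; rewrite <- !Rmult_assoc, <- vdot_vcomb.
    assert (Hend : cos (phi - (s - t)) = cos (phi - (t - t))).
    { rewrite Rminus_diag, Rminus_0_r, <- cos_neg; f_equal; unfold phi; field. }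
    rewrite <- (Rminus_diag (cos (phi - (t - t)))), <- Hend at 1.
    apply (increment_le_vdot_chord gamma dgamma _ (fun r => cos (phi - (r - t)))
             (fun r => sin (phi - (r - t)))); auto using admissible_is_derive; [lra | |].
    - intros r _; auto_derive; auto.
      replace (phi + - (r + - t)) with (phi - (r - t)) by ring; ring.
    - intros r Hr; rewrite vdot_vcomb.
      set (c := vdot (dgamma r) (dgamma t)); set (d := vdot (dgamma r) (vperp (dgamma t))).
      assert (Hcd : c ^ 2 + d ^ 2 = 1).
      { unfold c, d; rewrite <- (vdot_unit_decomp (dgamma t)), vnorm_eq1_vdot;
          try reflexivity; apply admissible_vnorm; lra. }
      assert (Hed : - (cos phi * Rabs d) <= e * cos phi * d).
      { assert (Habs : Rabs (e * cos phi * d) <= cos phi * Rabs d).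
        { rewrite !Rabs_mult, (Rabs_pos_eq (cos phi)) by exact Hcos.
          pose proof (Rmult_le_pos _ _ Hcos (Rabs_pos d)); nra. }
        pose proof (Rle_abs (- (e * cos phi * d))); rewrite Rabs_Ropp in *; lra. }
      assert (Hsin := sin_sub_le_of_cos_le phi (r - t) c d Hcd Hphi ltac:(unfold phi; lra)
                        (admissible_cos_le_vdot r Hr)).
      lra. }
  assert (H1 := Hside 1 ltac:(rewrite Rabs_R1; lra)).
  assert (H2 := Hside (-1) ltac:(rewrite Rabs_m1; lra)).
  unfold Rabs; destruct (Rcase_abs y); nra.
Qed.

End AdmissibleChord.

Theorem lemma16 (I : R -> Prop) (gamma dgamma : R -> vec) (t s : R) :
  admissible I gamma dgamma ->
  I t -> I s -> t < s < t + PI ->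
  gamma s <> gamma t /\
  vangle (dgamma t) (vsub (gamma s) (gamma t)) <= (s - t) / 2.
Proof.
  intros Hadm It Is Hts.
  assert (Hu := admissible_vnorm I gamma dgamma t s Hadm It Is t ltac:(lra)).
  assert (Halong := admissible_chord_along_tangent I gamma dgamma t s Hadm It Is Hts).
  assert (Hacross := admissible_chord_across_tangent I gamma dgamma t s Hadm It Is Hts).
  assert (Hsin : 0 < sin (s - t)) by (apply sin_gt_0; lra).
  split.
  - intros Heq; rewrite Heq, vdot_vsub_diag in Halong; lra.
  - unfold vangle; rewrite vdot_comm, Hu, Rmult_1_l, (vnorm_unit_decomp (dgamma t)) by exact Hu.
    apply acos_div_norm_le; [lra | | exact Hacross].
    pose proof (pow2_ge_0 (vdot (vsub (gamma s) (gamma t)) (vperp (dgamma t)))); nra.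
Qed.
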